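(* Let $p_{l_n}$ be a probability density function on $[0,\infty)$ (the normalized square-radius density), and let $F_{l_n}(\tau)=\int_0^{\tau}p_{l_n}(x)\,dx$ denote its cumulative distribution function. For a positive integer $N$ and $\beta>0$ define $$P_e(N,\beta)=\int_0^\infty\left[1-\frac{1}{\Gamma(N/2)}\,\gamma\!\left(\frac{N}{2},\frac{N\beta x}{2}\right)\right]p_{l_n}(x)\,dx .$$ Let $\tau=1/\beta$ and $P_e^a(\tau)=\lim_{N\to\infty}P_e(N,\beta)$. Then $$P_e^a(\tau)=\lim_{N\to\infty}P_e(N,\beta)=\int_0^{1/\beta}p_{l_n}(x)\,dx=\int_0^{\tau}p_{l_n}(x)\,dx=F_{l_n}(\tau).$$
   Context: $\Gamma$ is the gamma function and $\gamma(\alpha,x)=\int_0^x e^{-t}t^{\alpha-1}\,dt$ (for $\alpha>0$) is the lower incomplete gamma function. The quantity $P_e(N,\beta)$ is the word error rate of a length-$N$ binary linear block code with BPSK in AWGN at SNR $\beta=2E_s/N_0$, where $p_{l_n}$ is the density of the square radius of the decision region (in the direction of the noise) normalized by $NE_s$; the density $p_{l_n}$ is held fixed as $N\to\infty$. *)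

From HB Require Import structures.
From mathcomp Require Import all_boot all_order all_algebra.
From mathcomp Require Import all_classical all_reals all_analysis.
Set Implicit Arguments. Unset Strict Implicit. Unset Printing Implicit Defensive.
Import Order.TTheory GRing.Theory Num.Theory.
Import numFieldNormedType.Exports.
Local Open Scope classical_set_scope.
Local Open Scope ring_scope.

Definition Gamma {R : realType} (a : R) : R :=
  Rintegral lebesgue_measure `[0, +oo[ (fun t : R => expR (- t) * t `^ (a - 1)).

Definition lower_inc_gamma {R : realType} (a x : R) : R :=
  Rintegral lebesgue_measure `[0, x] (fun t : R => expR (- t) * t `^ (a - 1)).

Definition F_ln {R : realType} (p : R -> R) (tau : R) : R :=
  Rintegral lebesgue_measure `[0, tau] p.

Definition Pe_wer {R : realType} (p : R -> R) (N : nat) (beta : R) : R :=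
  Rintegral lebesgue_measure `[0, +oo[
    (fun x : R => (1 - (Gamma (N%:R / 2))^-1 *
                        lower_inc_gamma (N%:R / 2) (N%:R * beta * x / 2)) * p x).

(* With m = a - 1, the integrand e^{-t} t^m of Γ(a) and γ(a, ·) is log-concave
   with its maximum at t = m, so it lies below the exponential of its log-tangent
   at any b > 0, and on the segment between b and m it stays above its value at b.
   Integrating the tangent over [0, b] (b < m) or [b, ∞) (b > m) and comparing with
   the rectangle under the integrand between b and m gives Chebyshev-type bounds for
   the regularized function P(a, b) = γ(a, b) / Γ(a):
     P(a, b) <= b / (m - b)^2  if b < m,     1 - P(a, b) <= b / (b - m)^2  if b > m.
   For a = N/2 and b = Nβx/2 both are O(1/N), so P(N/2, Nβx/2) tends to 0 when
   βx < 1 and to 1 when βx > 1.  The integrand of P_e(N, β) therefore converges to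
   p·1_[0,1/β] off the null set {1/β}, and dominated convergence with dominating
   function p yields F(1/β). *)

From HB Require Import structures.
From mathcomp Require Import all_boot all_order all_algebra.
From mathcomp Require Import all_classical all_reals all_analysis.
From mathcomp Require Import ring lra measurable_realfun.
Import Order.TTheory GRing.Theory Num.Theory.
Import numFieldNormedType.Exports.
Local Open Scope classical_set_scope.
Local Open Scope ring_scope.

Section exponential_affine.
Context {R : realType}.
Local Notation mu := (@lebesgue_measure R).

Lemma is_derive_expR_affine (k b x : R) :
  is_derive x 1 (fun t => expR (k * (t - b))) (expR (k * (x - b)) * k).
Proof.
have affine : is_derive x 1 (fun t => k * (t - b)) k.
  have := is_deriveZ k (is_deriveB (is_derive_id x 1) (is_derive_cst b x 1)).
  by rewrite subr0 /GRing.scale/= mulr1.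
exact: is_derive1_comp.
Qed.

Lemma continuous_expR_affine (k b : R) : continuous (fun t => expR (k * (t - b))).
Proof.
move=> x; apply/differentiable_continuous/derivable1_diffP.
have dE := is_derive_expR_affine k b x; exact: ex_derive.
Qed.

Lemma measurable_expR_affine (k b : R) (D : set R) :
  measurable_fun D (fun t => (expR (k * (t - b)))%:E).
Proof.
apply/measurable_EFinP/measurable_funTS.
exact: continuous_measurable_fun (continuous_expR_affine k b).
Qed.

Section antiderivative.
Variables k b : R.
Let F t := k^-1 * expR (k * (t - b)).

Let is_derive_F : k != 0 -> forall x : R, is_derive x 1 F (expR (k * (x - b))).
Proof.
move=> k0 x; have := is_deriveZ k^-1 (is_derive_expR_affine k b x).
by rewrite /GRing.scale/= mulrCA mulVf// mulr1.
Qed.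

Let continuous_F : continuous F.
Proof.
move=> x; apply: (@continuousM _ _ (cst k^-1) (fun t => expR (k * (t - b)))).
  exact: cst_continuous.
exact: continuous_expR_affine.
Qed.

Lemma integral_expR_affine_itv (x y : R) : k != 0 -> x < y ->
  (\int[mu]_(t in `[x, y]) (expR (k * (t - b)))%:E =
   (k^-1 * (expR (k * (y - b)) - expR (k * (x - b))))%:E)%E.
Proof.
move=> k0 xy; have dF := is_derive_F k0.
rewrite mulrBr EFinB (@continuous_FTC2 R _ F _ _ xy); first by [].
- exact/continuous_subspaceT/continuous_expR_affine.
- split; first by move=> z _; exact: ex_derive.
  + exact/cvg_at_right_filter/continuous_F.
  + exact/cvg_at_left_filter/continuous_F.
- by move=> z _; rewrite derive1E; exact: derive_val.
Qed.

Lemma integral_expR_affine_itvy (x : R) : k < 0 ->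
  (\int[mu]_(t in `[x, +oo[) (expR (k * (t - b)))%:E =
   (- k^-1 * expR (k * (x - b)))%:E)%E.
Proof.
move=> k_lt0; have dF := is_derive_F (ltr0_neq0 k_lt0).
rewrite (@ge0_continuous_FTC2y R _ F _ 0).
- by rewrite sub0e mulNr.
- by move=> z _; exact: expR_ge0.
- exact/continuous_subspaceT/continuous_expR_affine.
- rewrite -(mulr0 k^-1); apply: cvgMl_tmp.
  have -> : (fun t => expR (k * (t - b))) = (fun z => expR (- z)) \o (fun t => - (k * (t - b))).
    by apply/funext => t /=; rewrite opprK.
  apply: (@cvg_comp _ _ _ _ _ _ (pinfty_nbhs R)); last exact: cvgr_expR.
  apply/cvgryPge => A; near=> t.
  have : (A / - k) + b <= t by near: t; apply: nbhs_pinfty_ge; exact: num_real.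
  rewrite -lerBrDr ler_pdivrMr ?oppr_gt0//; nra.
- by move=> z _; exact: ex_derive.
- exact/cvg_at_right_filter/continuous_F.
- by move=> z _; rewrite derive1E; exact: derive_val.
Unshelve. all: by end_near.
Qed.

End antiderivative.
End exponential_affine.

Section gamma_kernel.
Context {R : realType}.
Local Notation mu := (@lebesgue_measure R).

Definition gamma_kernel (m t : R) := expR (- t) * t `^ m.

Lemma gamma_kernel_ge0 (m t : R) : 0 <= gamma_kernel m t.
Proof. by rewrite mulr_ge0 ?expR_ge0 ?powR_ge0. Qed.

Lemma gamma_kernelE (m t : R) : 0 < t -> gamma_kernel m t = expR (m * ln t - t).
Proof. by move=> t0; rewrite /gamma_kernel /powR gt_eqF// expRD mulrC. Qed.

Lemma gamma_kernel0 (m : R) : 0 < m -> gamma_kernel m 0 = 0.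
Proof. by move=> m0; rewrite /gamma_kernel powR0 ?mulr0// gt_eqF. Qed.

Lemma measurable_gamma_kernel (m : R) (D : set R) :
  measurable_fun D (fun t => (gamma_kernel m t)%:E).
Proof.
apply/measurable_EFinP/measurable_funTS; apply: measurable_funM.
  by apply: measurableT_comp; [exact: measurable_expR | exact: oppr_measurable].
exact: measurable_powR.
Qed.

Lemma ln_le_tangent {b t : R} : 0 < b -> 0 < t -> b * (ln t - ln b) <= t - b.
Proof.
move=> b0 t0; have tb_gt : -1 < t / b - 1 by have := divr_gt0 t0 b0; lra.
have := le_ln1Dx tb_gt; rewrite addrC subrK ln_div ?posrE// => ln_le.
have -> : t - b = b * (t / b - 1) by field; rewrite gt_eqF.
nra.
Qed.

Lemma gamma_kernel_le_tangent (m b t : R) : 0 < m -> 0 < b -> 0 <= t ->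
  gamma_kernel m t <= gamma_kernel m b * expR ((m / b - 1) * (t - b)).
Proof.
move=> m0 b0; rewrite le_eqVlt => /predU1P[<-|t0].
  by rewrite gamma_kernel0// mulr_ge0 ?gamma_kernel_ge0 ?expR_ge0.
rewrite !gamma_kernelE// -expRD ler_expR.
have := ln_le_tangent b0 t0; set q := m / b.
have qb : q * b = m by rewrite /q mulrVK ?unitfE ?gt_eqF.
have q0 : 0 <= q by rewrite divr_ge0 ?ltW.
rewrite -qb; nra.
Qed.

Lemma gamma_kernel_ge_left (m b t : R) : 0 < b -> b <= t <= m ->
  gamma_kernel m b <= gamma_kernel m t.
Proof.
move=> b0 /andP[bt tm]; have t0 : 0 < t by exact: lt_le_trans bt.
rewrite !gamma_kernelE// ler_expR.
have := ln_le_tangent t0 b0.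
have : 0 <= ln t - ln b by rewrite subr_ge0 ler_ln ?posrE.
nra.
Qed.

Lemma gamma_kernel_ge_right (m b t : R) : 0 < m -> m <= t <= b ->
  gamma_kernel m b <= gamma_kernel m t.
Proof.
move=> m0 /andP[mt tb]; have t0 : 0 < t by exact: lt_le_trans mt.
have b0 : 0 < b by exact: lt_le_trans tb.
rewrite !gamma_kernelE// ler_expR.
have := ln_le_tangent t0 b0.
have : 0 <= ln b - ln t by rewrite subr_ge0 ler_ln ?posrE.
nra.
Qed.

Lemma integral_gamma_kernel_le_tangent (m b : R) (D : set R) :
  0 < m -> 0 < b -> measurable D -> D `<=` `[0, +oo[ ->
  (\int[mu]_(t in D) (gamma_kernel m t)%:E <=
   (gamma_kernel m b)%:E * \int[mu]_(t in D) (expR ((m / b - 1) * (t - b)))%:E)%E.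
Proof.
move=> m0 b0 mD D_ge0.
rewrite -ge0_integralZl_EFin ?gamma_kernel_ge0//; last exact: measurable_expR_affine.
apply: ge0_le_integral => //.
- by move=> t _; rewrite lee_fin gamma_kernel_ge0.
- exact: measurable_gamma_kernel.
- by apply: emeasurable_funM => //; exact: measurable_expR_affine.
- move=> t /D_ge0; rewrite /= in_itv/= andbT => t0.
  by rewrite -EFinM lee_fin gamma_kernel_le_tangent.
Qed.

End gamma_kernel.

Section incomplete_gamma.
Context {R : realType}.
Local Notation mu := (@lebesgue_measure R).

Lemma integrable_gamma_kernel (m : R) : 0 < m ->
  mu.-integrable `[0, +oo[ (EFin \o gamma_kernel m).
Proof.
move=> m0; apply/integrableP; split; first exact: measurable_gamma_kernel.
under eq_integral do rewrite gee0_abs ?lee_fin ?gamma_kernel_ge0//.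
have k_lt0 : m / (2 * m) - 1 < 0 by rewrite subr_lt0 ltr_pdivrMr ?mul1r; lra.
apply: le_lt_trans.
  by apply: (integral_gamma_kernel_le_tangent _ (2 * m)) => //; lra.
by rewrite integral_expR_affine_itvy// -EFinM ltry.
Qed.

Lemma integral_gamma_kernel_head (m b : R) : 0 < b -> b < m ->
  (\int[mu]_(t in `[0%R, b]) (gamma_kernel m t)%:E <=
   (gamma_kernel m b * (b / (m - b)))%:E)%E.
Proof.
move=> b0 bm; have m0 : 0 < m by exact: lt_trans bm.
have kE : m / b - 1 = (m - b) / b by field; rewrite gt_eqF.
apply: le_trans (integral_gamma_kernel_le_tangent _ b _ m0 b0 _ _) _ => //.
  by apply: subset_itvl; rewrite bnd_simp.
have k_gt0 : 0 < m / b - 1 by rewrite kE divr_gt0 ?subr_gt0.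
rewrite (integral_expR_affine_itv _ _ _ _ (lt0r_neq0 k_gt0) b0) -EFinM lee_fin.
rewrite ler_wpM2l ?gamma_kernel_ge0// subrr mulr0 expR0 kE invf_div.
apply: ler_piMr; first by rewrite divr_ge0 ?subr_ge0 ?ltW.
by rewrite gerBl expR_ge0.
Qed.

Lemma integral_gamma_kernel_tail (m b : R) : 0 < m -> m < b ->
  (\int[mu]_(t in `[b, +oo[) (gamma_kernel m t)%:E <=
   (gamma_kernel m b * (b / (b - m)))%:E)%E.
Proof.
move=> m0 mb; have b0 : 0 < b by exact: lt_trans mb.
have kE : m / b - 1 = - ((b - m) / b) by field; rewrite gt_eqF.
apply: le_trans (integral_gamma_kernel_le_tangent _ b _ m0 b0 _ _) _ => //.
  by apply: subset_itvr; rewrite bnd_simp ltW.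
rewrite integral_expR_affine_itvy; last by rewrite kE oppr_lt0 divr_gt0 ?subr_gt0.
by rewrite -EFinM subrr mulr0 expR0 mulr1 kE invrN opprK invf_div.
Qed.

Lemma GammaE (a : R) : 1 < a ->
  (\int[mu]_(t in `[0%R, +oo[) (gamma_kernel (a - 1) t)%:E)%E = (Gamma a)%:E.
Proof.
move=> a1; rewrite fineK//; apply: integrable_fin_num => //.
by apply: integrable_gamma_kernel; rewrite subr_gt0.
Qed.

Lemma lower_inc_gammaE (a x : R) : 1 < a ->
  (\int[mu]_(t in `[0%R, x]) (gamma_kernel (a - 1) t)%:E)%E = (lower_inc_gamma a x)%:E.
Proof.
move=> a1; have m0 : 0 < a - 1 by rewrite subr_gt0.
rewrite fineK//; apply: integrable_fin_num => //.
apply: (integrableS _ _ _ (integrable_gamma_kernel _ m0)) => //.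
by apply: subset_itvl; rewrite bnd_simp.
Qed.

Lemma Gamma_ge0 (a : R) : 0 <= Gamma a.
Proof. by rewrite fine_ge0// integral_ge0// => t _; rewrite lee_fin gamma_kernel_ge0. Qed.

Lemma lower_inc_gamma_ge0 (a x : R) : 0 <= lower_inc_gamma a x.
Proof. by rewrite fine_ge0// integral_ge0// => t _; rewrite lee_fin gamma_kernel_ge0. Qed.

Lemma le_lower_inc_gamma (a : R) : 1 < a -> {homo lower_inc_gamma a : x y / x <= y}.
Proof.
move=> a1 x y xy; rewrite -lee_fin -!lower_inc_gammaE//.
apply: ge0_subset_integral => //.
- exact: measurable_gamma_kernel.
- by move=> t _; rewrite lee_fin gamma_kernel_ge0.
- by apply: subset_itvl; rewrite bnd_simp.
Qed.

Lemma lower_inc_gamma_le_Gamma (a x : R) : 1 < a -> lower_inc_gamma a x <= Gamma a.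
Proof.
move=> a1; rewrite -lee_fin -lower_inc_gammaE// -GammaE//.
apply: ge0_subset_integral => //.
- exact: measurable_gamma_kernel.
- by move=> t _; rewrite lee_fin gamma_kernel_ge0.
- by apply: subset_itvl; rewrite bnd_simp.
Qed.

Lemma rectangle_le_Gamma (a x y v : R) : 1 < a -> 0 <= x < y -> 0 <= v ->
  (forall t, x <= t <= y -> v <= gamma_kernel (a - 1) t) -> (y - x) * v <= Gamma a.
Proof.
move=> a1 /andP[x0 xy] v0 v_le; rewrite -lee_fin -GammaE//.
apply: (@le_trans _ _ (\int[mu]_(t in `[x, y]) v%:E)%E).
  by rewrite integral_cst//= lebesgue_measure_itv/= lte_fin xy -EFinD -EFinM mulrC.
apply: (@le_trans _ _ (\int[mu]_(t in `[x, y]) (gamma_kernel (a - 1) t)%:E)%E).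
  by apply: ge0_le_integral => //; exact: measurable_gamma_kernel.
apply: ge0_subset_integral => //.
- exact: measurable_gamma_kernel.
- by move=> t _; rewrite lee_fin gamma_kernel_ge0.
- by apply: subset_itv; rewrite bnd_simp.
Qed.

Lemma Gamma_split (a b : R) : 1 < a -> 0 <= b ->
  (Gamma a)%:E = ((lower_inc_gamma a b)%:E +
                  \int[mu]_(t in `]b, +oo[) (gamma_kernel (a - 1) t)%:E)%E.
Proof.
move=> a1 b0; rewrite -GammaE// -lower_inc_gammaE//.
rewrite (@itv_bndbnd_setU _ _ (BLeft 0) (BRight b) (BInfty _ false)) ?bnd_simp//.
rewrite ge0_integral_setU//.
- exact: measurable_gamma_kernel.
- by move=> t _; rewrite lee_fin gamma_kernel_ge0.
- apply/disj_setPS => t [] /=; rewrite !in_itv/= => /andP[_ tb] /andP[bt _].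
  by move: tb; rewrite leNgt bt.
Qed.

Lemma Gamma_gt0 (a : R) : 1 < a -> 0 < Gamma a.
Proof.
move=> a1; set m := a - 1; have m0 : 0 < m by rewrite subr_gt0.
apply: lt_le_trans (rectangle_le_Gamma a (m / 2) m (gamma_kernel m (m / 2)) a1 _ _ _).
- by rewrite mulr_gt0 ?gamma_kernelE ?expR_gt0//; lra.
- by apply/andP; split; lra.
- exact: gamma_kernel_ge0.
- by move=> t mt; apply: gamma_kernel_ge_left => //; lra.
Qed.

End incomplete_gamma.

Section regularized_gamma.
Context {R : realType}.

Definition reg_lower_inc_gamma (a x : R) := (Gamma a)^-1 * lower_inc_gamma a x.

Lemma reg_lower_inc_gamma_ge0 (a x : R) : 0 <= reg_lower_inc_gamma a x.
Proof. by rewrite mulr_ge0 ?invr_ge0 ?Gamma_ge0 ?lower_inc_gamma_ge0. Qed.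

Lemma reg_lower_inc_gamma_le1 (a x : R) : 1 < a -> reg_lower_inc_gamma a x <= 1.
Proof.
by move=> a1; rewrite ler_pdivrMl ?Gamma_gt0// mulr1 lower_inc_gamma_le_Gamma.
Qed.

Lemma le_reg_lower_inc_gamma (a : R) : 1 < a ->
  {homo reg_lower_inc_gamma a : x y / x <= y}.
Proof.
by move=> a1 x y xy; rewrite ler_wpM2l ?invr_ge0 ?Gamma_ge0 ?le_lower_inc_gamma.
Qed.

Lemma reg_lower_inc_gamma_head (a b : R) : 1 < a -> 0 < b < a - 1 ->
  reg_lower_inc_gamma a b <= b / (a - 1 - b) ^+ 2.
Proof.
move=> a1 /andP[b0 bm]; set m := a - 1.
have mb : 0 < m - b by rewrite subr_gt0.
have head : lower_inc_gamma a b <= gamma_kernel m b * (b / (m - b)).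
  by rewrite -lee_fin -lower_inc_gammaE// integral_gamma_kernel_head.
have rect : (m - b) * gamma_kernel m b <= Gamma a.
  apply: rectangle_le_Gamma => //; first by rewrite ltW.
  - exact: gamma_kernel_ge0.
  - by move=> t bt; exact: gamma_kernel_ge_left.
rewrite ler_pdivrMl ?Gamma_gt0// (le_trans head)//.
have -> : gamma_kernel m b * (b / (m - b)) =
          (m - b) * gamma_kernel m b * (b / (m - b) ^+ 2).
  by field; rewrite gt_eqF.
by rewrite ler_wpM2r// divr_ge0 ?exprn_ge0 ?ltW.
Qed.

Lemma reg_lower_inc_gamma_tail (a b : R) : 1 < a -> a - 1 < b ->
  1 - reg_lower_inc_gamma a b <= b / (b - (a - 1)) ^+ 2.
Proof.
move=> a1 mb; set m := a - 1 in mb *.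
have m0 : 0 < m by rewrite subr_gt0.
have b0 : 0 < b by exact: lt_trans mb.
have G0 := Gamma_gt0 _ a1.
have tail : Gamma a - lower_inc_gamma a b <= gamma_kernel m b * (b / (b - m)).
  rewrite -lee_fin EFinB (Gamma_split _ _ a1 (ltW b0)) addeAC subee ?add0e//.
  apply: le_trans (integral_gamma_kernel_tail _ _ m0 mb).
  apply: ge0_subset_integral => //.
  - exact: measurable_gamma_kernel.
  - by move=> t _; rewrite lee_fin gamma_kernel_ge0.
  - by apply: subset_itvr; rewrite bnd_simp.
have rect : (b - m) * gamma_kernel m b <= Gamma a.
  apply: rectangle_le_Gamma => //; first by rewrite ltW.
  - exact: gamma_kernel_ge0.
  - by move=> t mt; exact: gamma_kernel_ge_right.
have -> : 1 - reg_lower_inc_gamma a b = (Gamma a - lower_inc_gamma a b) / Gamma a.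
  by rewrite /reg_lower_inc_gamma; field; rewrite gt_eqF.
rewrite ler_pdivrMr// mulrC (le_trans tail)//.
have bm : 0 < b - m by rewrite subr_gt0.
have -> : gamma_kernel m b * (b / (b - m)) =
          (b - m) * gamma_kernel m b * (b / (b - m) ^+ 2).
  by field; rewrite gt_eqF.
by rewrite ler_wpM2r// divr_ge0 ?exprn_ge0 ?ltW.
Qed.

Lemma cvg0_le_invn (u : R^nat) (K : R) :
  (\forall n \near \oo, 0 <= u n <= K / n%:R) -> u @ \oo --> 0.
Proof.
move=> u_bnd; have inv_cvg0 : (n%:R : R)^-1 @[n --> \oo] --> 0.
  by rewrite -cvg_shiftS; exact: cvg_harmonic.
apply: (@squeeze_cvgr _ _ _ _ (cst 0) (fun n => K / n%:R) _ u_bnd).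
- exact: cvg_cst.
- by rewrite -(mulr0 K); exact: cvgMl_tmp inv_cvg0.
Qed.

Lemma cvg_reg_lower_inc_gamma_lt1 (c : R) : 0 <= c -> c < 1 ->
  reg_lower_inc_gamma (n%:R / 2) (n%:R * c / 2) @[n --> \oo] --> 0.
Proof.
(* Bound at the point c' > 0 rather than at c, which may be 0. *)
move=> c0 c1; set c' := (1 + c) / 2; set d := 1 - c'.
have d0 : 0 < d by rewrite /d /c'; lra.
apply: (@cvg0_le_invn _ (8 * c' / d ^+ 2)); near=> n.
have : 4 / d <= n%:R :> R by near: n; exact: nbhs_infty_ger.
rewrite ler_pdivrMr// => nd; set x := n%:R : R in nd *.
have ndE : x * d = x - x * c' by rewrite /d; ring.
set a := x / 2; set b := x * c' / 2.
have a1 : 1 < a by rewrite /a /d /c' in nd *; nra.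
have b0 : 0 < b by rewrite /b /c'; nra.
have gap : x * d / 4 <= a - 1 - b by rewrite /a /b; lra.
have x0 : 0 < x by nra.
apply/andP; split; first exact: reg_lower_inc_gamma_ge0.
apply: (@le_trans _ _ (reg_lower_inc_gamma a b)).
  by apply: le_reg_lower_inc_gamma => //; rewrite /b /c'; nra.
apply: le_trans (reg_lower_inc_gamma_head _ _ a1 _) _.
  by rewrite b0 /=; lra.
have -> : 8 * c' / d ^+ 2 / x = b / (x * d / 4) ^+ 2.
  by rewrite /b; field; rewrite (lt0r_neq0 x0) (lt0r_neq0 d0).
apply: ler_wpM2l; first exact: ltW.
have xd4 : 0 < x * d / 4 by lra.
rewrite lef_pV2 ?posrE ?exprn_gt0//; last lra.
rewrite !expr2; nra.
Unshelve. all: by end_near.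
Qed.

Lemma cvg_reg_lower_inc_gamma_gt1 (c : R) : 1 < c ->
  reg_lower_inc_gamma (n%:R / 2) (n%:R * c / 2) @[n --> \oo] --> (1 : R).
Proof.
move=> c1; set d := c - 1; have d0 : 0 < d by rewrite /d; lra.
suff P1 : (1 - reg_lower_inc_gamma (n%:R / 2) (n%:R * c / 2)) @[n --> \oo] --> 0.
  have -> : (fun n => reg_lower_inc_gamma (n%:R / 2) (n%:R * c / 2)) =
            (fun n => 1 - (1 - reg_lower_inc_gamma (n%:R / 2) (n%:R * c / 2))).
    by apply/funext => n; rewrite subKr.
  by rewrite -[X in _ --> X]subr0; apply: cvgB => //; exact: cvg_cst.
apply: (@cvg0_le_invn _ (2 * c / d ^+ 2)); near=> n.
have : 3 <= n%:R :> R by near: n; exact: nbhs_infty_ger.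
set x := n%:R : R => x3.
have xdE : x * d = x * c - x by rewrite /d; ring.
set a := x / 2; set b := x * c / 2.
have a1 : 1 < a by rewrite /a; lra.
have gap : x * d / 2 <= b - (a - 1) by rewrite /a /b; lra.
have x0 : 0 < x by lra.
have xd0 : 0 < x * d by rewrite mulr_gt0.
apply/andP; split; first by rewrite subr_ge0 reg_lower_inc_gamma_le1.
apply: le_trans (reg_lower_inc_gamma_tail _ _ a1 _) _; first lra.
have -> : 2 * c / d ^+ 2 / x = b / (x * d / 2) ^+ 2.
  by rewrite /b; field; rewrite (lt0r_neq0 x0) (lt0r_neq0 d0).
apply: ler_wpM2l; first by rewrite /b; nra.
have xd2 : 0 < x * d / 2 by lra.
rewrite lef_pV2 ?posrE ?exprn_gt0//; last lra.
rewrite !expr2; nra.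
Unshelve. all: by end_near.
Qed.

End regularized_gamma.

Definition wer_integrand {R : realType} (p : R -> R) (beta : R) (n : nat) (x : R) :=
  (1 - reg_lower_inc_gamma (n%:R / 2) (n%:R * beta * x / 2)) * p x.

Section word_error_rate.
Context {R : realType}.
Local Notation mu := (@lebesgue_measure R).

Lemma natr_half_gt1 (n : nat) : (2 < n)%N -> 1 < n%:R / 2 :> R.
Proof. by move=> n2; rewrite ltr_pdivlMr// mul1r ltr_nat. Qed.

Variables (p : R -> R) (beta : R).
Hypothesis beta_gt0 : 0 < beta.

Lemma cvg_wer_integrand (x : R) : 0 <= x -> x != beta^-1 ->
  wer_integrand p beta n x @[n --> \oo] --> (p \_ `[0, beta^-1]) x.
Proof.
move=> x0 x_neq; rewrite /wer_integrand.
set P := reg_lower_inc_gamma.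
have -> : (fun n : nat => (1 - P (n%:R / 2) (n%:R * beta * x / 2)) * p x) =
          (fun n : nat => (1 - P (n%:R / 2) (n%:R * (beta * x) / 2)) * p x).
  by apply/funext => n; rewrite mulrA.
have bx0 : 0 <= beta * x by exact: mulr_ge0 (ltW beta_gt0) x0.
have [xb|bx] : x < beta^-1 \/ beta^-1 < x by case: ltgtP x_neq => //; [left|right].
- have bx1 : beta * x < 1 by rewrite -(mulfV (lt0r_neq0 beta_gt0)) ltr_pM2l.
  rewrite patchE mem_set/=; last by rewrite in_itv/= x0 ltW.
  have P0 := cvg_reg_lower_inc_gamma_lt1 (beta * x) bx0 bx1.
  have := cvgMr_tmp (b := p x) (cvgB (cvg_cst (1 : R)) P0).
  by rewrite subr0 mul1r => lim; exact: lim.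
- have bx1 : 1 < beta * x by rewrite -(mulfV (lt0r_neq0 beta_gt0)) ltr_pM2l.
  rewrite patchE memNset/=; last by rewrite in_itv/= x0 leNgt bx.
  have P1 := cvg_reg_lower_inc_gamma_gt1 _ bx1.
  have := cvgMr_tmp (b := p x) (cvgB (cvg_cst (1 : R)) P1).
  by rewrite subrr mul0r => lim; exact: lim.
Qed.

Lemma measurable_wer_integrand (n : nat) (D : set R) : (2 < n)%N -> measurable D ->
  measurable_fun D p -> measurable_fun D (fun x => (wer_integrand p beta n x)%:E).
Proof.
move=> n2 mD mp; apply/measurable_EFinP; apply: measurable_funM => //.
apply: measurable_funB; first exact: measurable_cst.
apply: nondecreasing_measurable => // x y xy.
apply: le_reg_lower_inc_gamma; first exact: natr_half_gt1.
have nb0 : 0 <= n%:R * beta by rewrite mulr_ge0 // ltW.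
by rewrite ler_wpM2r ?invr_ge0// ler_wpM2l.
Qed.

Hypothesis p_ge0 : forall x, 0 <= x -> 0 <= p x.

Lemma wer_integrand_bound (n : nat) (x : R) : (2 < n)%N -> 0 <= x ->
  0 <= wer_integrand p beta n x <= p x.
Proof.
move=> n2 x0; have a1 := natr_half_gt1 _ n2.
have P0 := reg_lower_inc_gamma_ge0 (n%:R / 2) (n%:R * beta * x / 2).
have P1 := reg_lower_inc_gamma_le1 _ (n%:R * beta * x / 2) a1.
rewrite /wer_integrand mulr_ge0 ?subr_ge0 ?p_ge0//=.
by rewrite ler_piMl ?p_ge0// lerBlDr lerDl.
Qed.

Hypothesis p_int : mu.-integrable `[0, +oo[ (EFin \o p).

Let p_meas : measurable_fun (`[0, +oo[ : set R) p.
Proof. by apply/measurable_EFinP; apply: (measurable_funS _ _ (measurable_int mu p_int)). Qed.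

Lemma Pe_wer_setD1 (n : nat) : (2 < n)%N ->
  Pe_wer p n beta =
  fine (\int[mu]_(x in `[0%R, +oo[ `\ beta^-1%R) (wer_integrand p beta n x)%:E)%E.
Proof.
move=> n2; rewrite integral_setD1//.
- by apply: measurableD; [exact: measurable_itv | exact: measurable_set1].
- apply: measurable_wer_integrand => //.
    by apply: measurableD; [exact: measurable_itv | exact: measurable_set1].
  by apply: (measurable_funS _ _ p_meas) => //; exact: subDsetl.
Qed.

Lemma integral_restrict_F_ln (tau : R) : 0 <= tau ->
  (\int[mu]_(x in `[0%R, +oo[ `\ tau) ((p \_ `[0, tau]) x)%:E)%E = (F_ln p tau)%:E.
Proof.
move=> tau0; set I := `[0%R, +oo[%classic; set A := `[0, tau]%classic.
have AI : A `<=` I by apply: subset_itvl; rewrite bnd_simp.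
have EFin_patch x : ((p \_ A) x)%:E = ((EFin \o p) \_ A) x.
  by rewrite !patchE; case: ifP.
have mpA : measurable_fun I ((EFin \o p) \_ A).
  apply/measurable_restrict; [exact: measurable_itv | exact: measurable_itv |].
  by apply: (measurable_funS _ _ (measurable_int mu p_int)) => //; exact: subIsetl.
under eq_integral do rewrite EFin_patch.
rewrite integral_setD1; last 2 first.
- by apply: measurableD; [exact: measurable_itv | exact: measurable_set1].
- by apply: (measurable_funS _ _ mpA) => //; exact: measurable_itv.
rewrite -integral_mkcondr setIidr// /F_ln /Rintegral fineK//.
by apply: integrable_fin_num => //; exact: integrableS p_int.
Qed.

Lemma cvg_integral_wer_integrand :
  (\int[mu]_(x in `[0%R, +oo[ `\ beta^-1%R) (wer_integrand p beta (n + 3)%N x)%:E)%E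
    @[n --> \oo] -->
  (\int[mu]_(x in `[0%R, +oo[ `\ beta^-1%R) ((p \_ `[0, beta^-1%R]) x)%:E)%E.
Proof.
set D := _ `\ _.
have mD : measurable D by apply: measurableD; [exact: measurable_itv | exact: measurable_set1].
have DI : D `<=` `[0%R, +oo[ by move=> x [].
have mp : measurable_fun D p by apply: (measurable_funS _ _ p_meas) => //.
apply: (@dominated_cvg _ _ _ mu D mD _ _ (fun x => (p x)%:E)).
- by move=> n; apply: measurable_wer_integrand; rewrite ?addn3.
- move=> x [+ xb]; rewrite /= in_itv/= andbT => x0.
  apply: cvg_EFin; first exact: nearW.
  rewrite (cvg_shiftn 3 (fun n => wer_integrand p beta n x)).
  by apply: cvg_wer_integrand => //; apply/eqP.
- by [].
- exact: integrableS p_int.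
- move=> n x [+ _]; rewrite /= in_itv/= andbT => x0.
  have n3 : (2 < n + 3)%N by rewrite addn3.
  have /andP[w0 wp] := wer_integrand_bound _ _ n3 x0.
  by rewrite lee_fin ger0_norm.
Qed.

End word_error_rate.

Theorem mainTheorem1 (R : realType) (p : R -> R) (beta : R)
  (p_meas : measurable_fun (`[0, +oo[ : set R) p)
  (p_ge0 : forall x : R, 0 <= x -> 0 <= p x)
  (p_tot : (\int[@lebesgue_measure R]_(x in (`[0%R, +oo[ : set R)) (p x)%:E = 1)%E)
  (beta_gt0 : 0 < beta) :
  Pe_wer p N beta @[N --> \oo] --> F_ln p beta^-1.
Proof.
have p_int : (@lebesgue_measure R).-integrable `[0, +oo[ (EFin \o p).
  apply/integrableP; split; first exact/measurable_EFinP.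
  have -> : (\int[lebesgue_measure]_(x in `[0%R, +oo[) `|(EFin \o p) x| =
            \int[lebesgue_measure]_(x in `[0%R, +oo[) (p x)%:E)%E.
    apply: eq_integral => x; rewrite inE/= in_itv/= andbT => x0.
    by rewrite ger0_norm ?p_ge0.
  by rewrite p_tot ltry.
(* After a shift by 3, N/2 > 1 and the bounds on the incomplete gamma function apply. *)
rewrite -(cvg_shiftn 3) /=.
have -> : (fun n => Pe_wer p (n + 3) beta) = fine \o (fun n =>
    \int[lebesgue_measure]_(x in `[0%R, +oo[ `\ beta^-1%R)
      (wer_integrand p beta (n + 3)%N x)%:E)%E.
  by apply/funext => n; apply: Pe_wer_setD1 => //; rewrite addn3.
have binv_ge0 : 0 <= beta^-1 by rewrite invr_ge0; exact: ltW.
apply: fine_cvg; rewrite -integral_restrict_F_ln//.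
exact: cvg_integral_wer_integrand.
Qed.
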